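(* Let $G$ be a group, $E$ a real Banach space, and $f\colon G\to E$ such that $\|f(xy)+f(xy^{-1})-2f(x)\|\le c$ for all $x,y\in G$, for some $c>0$. For $m\in\mathbb{N}$, $m\ge 2$, let $\varphi_m(x)=\lim_{k\to\infty}\frac{1}{m^k}f(x^{m^k})$. Then $\varphi_m\in KJ(G;E)$.
   Context: For such $f$ and $m\ge 2$ the limit defining $\varphi_m(x)$ exists in $E$ for every $x\in G$. $KJ(G;E)$ is the space of functions $g\colon G\to E$ for which there exists a constant $d>0$ with $\|g(xy)+g(xy^{-1})-2g(x)\|\le d$ for all $x,y\in G$. *)

From HB Require Import structures.
From mathcomp Require Import all_boot all_order all_algebra.
From mathcomp Require Import all_classical all_reals all_analysis.
Set Implicit Arguments. Unset Strict Implicit. Unset Printing Implicit Defensive.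
Import Order.TTheory GRing.Theory Num.Theory numFieldNormedType.Exports.
Local Open Scope ring_scope.
Local Open Scope classical_set_scope.

Definition phi_m (R : realType) (G : groupType) (E : normedModType R)
    (f : G -> E) (m : nat) (x : G) : E :=
  lim ((fun k : nat => ((m ^ k)%:R)^-1 *: f (x ^+ (m ^ k))%g) @ \oo).

Definition KJ (R : realType) (G : groupType) (E : normedModType R)
    (g : G -> E) : Prop :=
  exists d : R, 0 < d /\
    forall x y : G, `| g (x * y)%g + g (x * y^-1)%g - 2 *: g x | <= d.

From HB Require Import structures.
From mathcomp Require Import all_boot all_order all_algebra.
From mathcomp Require Import all_classical all_reals all_analysis.
From mathcomp Require Import lra.
Import Order.TTheory GRing.Theory Num.Theory numFieldNormedType.Exports.
Set Implicit Arguments. Unset Strict Implicit. Unset Printing Implicit Defensive.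
Local Open Scope ring_scope.

(** The defect g(xy) + g(xy^-1) - 2g(x) is additive in g, so KJ is stable under
    bounded perturbations.  Iterating the quasi-Jensen inequality along the
    powers of y bounds f(y^n) - f(1) - n(f(y) - f(1)) by c n^2; in particular
    f(y^m) - m f(y) is bounded.  Hence the terms m^-k f(x^(m^k)) defining phi_m
    have geometrically decreasing increments, so phi_m is within a bounded
    distance of f and inherits the KJ property from it. *)

Section geometric_increments.
Variables (R : realType) (E : completeNormedModType R) (v : E ^nat) (a q : R).
Hypotheses (q_ge0 : 0 <= q) (q_lt1 : q < 1).
Hypothesis v_incr : forall k, `|v k.+1 - v k| <= a * q ^+ k.

Let normq_lt1 : `|q| < 1. Proof. by rewrite ger0_norm. Qed.

Let normed_telescope_cvg : cvgn [normed series (telescope v)].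
Proof.
have a_ge0 : 0 <= a by rewrite -(mulr1 a) -(expr0 q); apply: le_trans (v_incr 0).
apply: (series_le_cvg _ _ v_incr); last exact: is_cvg_geometric_series.
- by move=> k; rewrite normr_ge0.
- by move=> k; rewrite geometric_ge0.
Qed.

Lemma geometric_increments_cvg : cvgn v.
Proof.
have -> : v = cst (v 0%N) + series (telescope v).
  by apply/funext => n; exact: eq_sum_telescope.
by apply: is_cvgD; [exact: is_cvg_cst | exact: normed_cvg].
Qed.

Lemma geometric_increments_lim_dist : `|limn v - v 0%N| <= a / (1 - q).
Proof.
have -> : limn v - v 0%N = limn (series (telescope v)).
  rewrite telescopeK; apply/esym/cvg_lim => //.
  by apply: cvgB; [exact: geometric_increments_cvg | exact: cvg_cst].
apply: le_trans (lim_series_norm normed_telescope_cvg) _.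
rewrite -(cvg_lim _ (@cvg_geometric_series _ a _ normq_lt1)) //.
apply: lim_series_le normed_telescope_cvg _ v_incr.
exact: is_cvg_geometric_series.
Qed.

End geometric_increments.

Section jensen_defect.
Variables (R : realType) (G : groupType) (E : normedModType R).

Definition jensen_defect (g : G -> E) (x y : G) : E :=
  g (x * y)%g + g (x * y^-1)%g - 2 *: g x.

Lemma jensen_defectD (g h : G -> E) x y :
  jensen_defect (g \+ h) x y = jensen_defect g x y + jensen_defect h x y.
Proof.
by rewrite /jensen_defect /= scalerDr opprD (addrACA (g _)) (addrACA (g _ + g _)).
Qed.

Lemma KJP (g : G -> E) :
  KJ g <-> exists2 d : R, 0 < d & forall x y, `|jensen_defect g x y| <= d.
Proof. by split=> [[d [d_gt0 gd]] | [d d_gt0 gd]]; exists d. Qed.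

Lemma KJ_bounded_perturbation (g h : G -> E) (B : R) :
  KJ g -> (forall x, `|h x - g x| <= B) -> KJ h.
Proof.
move=> /KJP[d d_gt0 gd] hgB; apply/KJP.
have B_ge0 : 0 <= B by apply: le_trans (hgB 1%g).
exists (d + 4 * B) => [|x y]; first lra.
have -> : h = g \+ (h \- g) by apply/funext => z; rewrite /= addrC subrK.
rewrite jensen_defectD; apply: le_trans (ler_normD _ _) _; apply: lerD => //.
rewrite /jensen_defect; apply: le_trans (ler_normB _ _) _.
apply: le_trans (lerD (ler_normD _ _) (lexx _)) _.
rewrite normrZ ger0_norm //.
have := hgB (x * y)%g; have := hgB (x * y^-1)%g; have := hgB x; rewrite /=; lra.
Qed.

End jensen_defect.

Section quasi_jensen.
Variables (R : realType) (G : groupType) (E : normedModType R).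
Variables (f : G -> E) (c : R).
Hypothesis f_quasi_jensen : forall x y, `|jensen_defect f x y| <= c.

Let c_ge0 : 0 <= c. Proof. exact: le_trans (f_quasi_jensen 1%g 1%g). Qed.

Lemma quasi_jensen_pow (y : G) (n : nat) :
  `|f (y ^+ n)%g - f 1%g - n%:R *: (f y - f 1%g)| <= c * n%:R ^+ 2.
Proof.
pose d k := f (y ^+ k.+1)%g - f (y ^+ k)%g.
have defect_pow k : jensen_defect f (y ^+ k.+1)%g y = d k.+1 - d k.
  have shift_back : (y ^+ k.+1 / y = y ^+ k)%g by rewrite expgSr mulgK.
  rewrite /jensen_defect -expgSr shift_back /d scaler_nat mulr2n.
  by rewrite opprB opprD addrACA.
have d_dist k : `|d k - d 0%N| <= c * k%:R.
  elim: k => [|k IHk]; first by rewrite subrr normr0 mulr0.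
  rewrite -natr1 mulrDr mulr1 -(subrK (d k) (d k.+1)) -addrA -defect_pow.
  by apply: le_trans (ler_normD _ _) _; rewrite [c * _ + c]addrC lerD.
have -> : f (y ^+ n)%g - f 1%g - n%:R *: (f y - f 1%g)
          = \sum_(0 <= k < n) (d k - d 0%N).
  by rewrite sumrB telescope_sumr // sumr_const_nat subn0 scaler_nat /d expg1 expg0.
apply: le_trans (ler_norm_sum _ _ _) _.
apply: le_trans (ler_sum_nat (G := fun _ => c * n%:R) _) _.
  move=> k /andP[_ k_lt_n]; apply: le_trans (d_dist k) _.
  by rewrite ler_wpM2l // ler_nat ltnW.
by rewrite sumr_const_nat subn0 -[_ *+ n]mulr_natr expr2 mulrA.
Qed.

Lemma quasi_jensen_expn (y : G) (n : nat) :
  `|f (y ^+ n)%g - n%:R *: f y| <= c * n%:R ^+ 2 + (n%:R + 1) * `|f 1%g|.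
Proof.
have -> : f (y ^+ n)%g - n%:R *: f y
          = (f (y ^+ n)%g - f 1%g - n%:R *: (f y - f 1%g)) + (f 1%g - n%:R *: f 1%g).
  rewrite scalerBr opprB -addrA [_ + (_ - n%:R *: f 1%g)]addrC.
  by rewrite (addrA (f 1%g - _)) subrK addrA subrK.
apply: le_trans (ler_normD _ _) _; apply: lerD; first exact: quasi_jensen_pow.
by apply: le_trans (ler_normB _ _) _; rewrite normrZ ger0_norm // mulrDl mul1r addrC.
Qed.

End quasi_jensen.

Section homogenization.
Variables (R : realType) (G : groupType) (E : completeNormedModType R).
Variables (f : G -> E) (m : nat) (C : R).
Hypothesis m_gt1 : (1 < m)%N.
Hypothesis f_quasi_homogeneous : forall y, `|f (y ^+ m)%g - m%:R *: f y| <= C.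

Lemma dist_phi_m_le (x : G) : `|phi_m f m x - f x| <= C / m%:R / (1 - m%:R^-1).
Proof.
have m_gt0 : 0 < m%:R :> R by rewrite ltr0n ltnW.
pose v k := ((m ^ k)%:R)^-1 *: f (x ^+ (m ^ k))%g.
have v_incr k : `|v k.+1 - v k| <= C / m%:R * m%:R^-1 ^+ k.
  set y := (x ^+ (m ^ k))%g.
  have -> : v k.+1 - v k = ((m ^ k.+1)%:R)^-1 *: (f (y ^+ m)%g - m%:R *: f y).
    rewrite /v expnSr expgnA natrM scalerBr scalerA invfM -mulrA mulVf ?mulr1 //.
    by rewrite gt_eqF.
  rewrite normrZ ger0_norm ?invr_ge0 ?ler0n // natrX exprVn -mulrA -invfM -exprS.
  by rewrite [leRHS]mulrC ler_wpM2l ?invr_ge0 ?exprn_ge0 ?(ltW m_gt0).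
have m_inv_lt1 : m%:R^-1 < 1 :> R by rewrite invf_lt1 // ltr1n.
have m_inv_ge0 : 0 <= m%:R^-1 :> R by rewrite invr_ge0 ltW.
have := geometric_increments_lim_dist m_inv_ge0 m_inv_lt1 v_incr.
by rewrite /v expn0 expg1 invr1 scale1r.
Qed.

End homogenization.

Theorem lemma2p5 (R : realType) (G : groupType) (E : completeNormedModType R)
    (f : G -> E) (c : R) (hc : 0 < c)
    (hf : forall x y : G, `| f (x * y)%g + f (x * y^-1)%g - 2 *: f x | <= c)
    (m : nat) (hm : (2 <= m)%N) :
  KJ (phi_m f m).
Proof.
have f_quasi_jensen : forall x y, `|jensen_defect f x y| <= c := hf.
have KJf : KJ f by apply/KJP; exists c.
have f_quasi_homogeneous := quasi_jensen_expn f_quasi_jensen ^~ m.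
apply: (KJ_bounded_perturbation KJf) => x.
exact: dist_phi_m_le hm f_quasi_homogeneous x.
Qed.
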